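(* For any dimension $d>0$ and $\delta>0$, there exists a ReLU neural network $\mathcal N:\mathbb{R}^d \to \mathbb{R}^d$ with 2 hidden layers, width $4d^2$, and magnitudes of weights at most $\frac{1}{\delta}$, that sorts (outputs the entries in ascending order) any input $\mathbf{x} \in \mathcal S^{d}_{\delta}$ all of whose entries are non-zero. For general input $\mathbf{x}\in\mathbb{R}^d$, every output value is bounded in magnitude by $d \|\mathbf{x}\|_{\infty}$.
   Context: $\mathcal S^d_\delta$ is the set of vectors $\mathbf{x}\in\mathbb{R}^d$ whose non-zero entries all lie in $[\delta,1-\delta]$ and are pairwise at distance at least $\delta$ (i.e. $|x_i-x_j|\ge\delta$ for all $i\ne j$ with $x_i,x_j$ non-zero). A ReLU network applies $[z]_+=\max\{0,z\}$ after each affine hidden map, with an affine output layer; width is the number of neurons in the largest hidden layer. *)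

From HB Require Import structures.
From mathcomp Require Import all_boot all_order all_algebra all_fingroup.
From mathcomp Require Import reals.
Set Implicit Arguments. Unset Strict Implicit. Unset Printing Implicit Defensive.
Import Order.TTheory GRing.Theory Num.Theory.
Local Open Scope ring_scope.

Definition relu (R : realType) (z : R) : R := Num.max 0 z.
Definition relu_mx (R : realType) (n : nat) (v : 'cV[R]_n) : 'cV[R]_n :=
  map_mx (@relu R) v.

Definition relu_net2 (R : realType) (d h1 h2 e : nat)
  (W1 : 'M[R]_(h1, d)) (b1 : 'cV[R]_h1)
  (W2 : 'M[R]_(h2, h1)) (b2 : 'cV[R]_h2)
  (W3 : 'M[R]_(e, h2)) (b3 : 'cV[R]_e) (x : 'cV[R]_d) : 'cV[R]_e :=
  W3 *m relu_mx (W2 *m relu_mx (W1 *m x + b1) + b2) + b3.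

Definition entries_bounded (R : realType) (m n : nat) (A : 'M[R]_(m, n)) (c : R) : Prop :=
  forall i j, `|A i j| <= c.

Definition in_S (R : realType) (d : nat) (delta : R) (x : 'cV[R]_d) : Prop :=
  (forall i, x i ord0 != 0 -> delta <= x i ord0 <= 1 - delta) /\
  (forall i j, i != j -> x i ord0 != 0 -> x j ord0 != 0 ->
     delta <= `|x i ord0 - x j ord0|).

Definition sorts_to (R : realType) (d : nat) (x y : 'cV[R]_d) : Prop :=
  (exists s : {perm 'I_d}, forall i, y i ord0 = x (s i) ord0) /\
  (forall i j : 'I_d, (i <= j)%N -> y i ord0 <= y j ord0).

Definition linf (R : realType) (d : nat) (x : 'cV[R]_d) : R :=
  \big[Num.max/0]_(i < d) `|x i ord0|.

(* Each entry x_i gets a soft rank r_i = sum_j s(x_i - x_j), where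
   s(z) = [z/delta]_+ - [z/delta - 1]_+ is 0 for z <= 0 and 1 for z >= delta; on
   S^d_delta with non-zero entries, r_i is exactly the number of entries below x_i,
   so these ranks form a permutation of {0, ..., d-1}.  With the ramp
   rho_i(c) = [x_i + c - r_i]_+ - [c - r_i]_+, which climbs from 0 to [x_i]_+ on
   [r_i - [x_i]_+, r_i], output k is sum_i (rho_i(k) - rho_i(k-1)): for entries in
   [0, 1] and integer ranks this picks exactly the x_i of rank k.  For arbitrary x
   every summand lies in [0, [x_i]_+], whence the bound d ||x||_oo. *)
From HB Require Import structures.
From mathcomp Require Import all_boot all_order all_algebra all_fingroup.
From mathcomp Require Import reals.
From mathcomp Require Import zify ring lra.
Set Implicit Arguments. Unset Strict Implicit. Unset Printing Implicit Defensive.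
Import Order.TTheory GRing.Theory Num.Theory.
Local Open Scope ring_scope.

Section Relu.
Variable R : realType.

Lemma relu_cases (z : R) : (0 <= z /\ relu z = z) \/ (z < 0 /\ relu z = 0).
Proof. by rewrite /relu; case: (lerP 0 z); [left | right]. Qed.

Lemma relu_id (z : R) : 0 <= z -> relu z = z.
Proof. by move=> z_ge0; rewrite /relu max_r. Qed.

Lemma relu0 (z : R) : z <= 0 -> relu z = 0.
Proof. by move=> z_le0; rewrite /relu max_l. Qed.

Lemma relu_ge0 (z : R) : 0 <= relu z.
Proof. by rewrite /relu le_max lexx. Qed.

Lemma relu_le_norm (z : R) : relu z <= `|z|.
Proof. by rewrite /relu ge_max normr_ge0 ler_norm. Qed.

End Relu.

Section Linf.
Variables (R : realType) (d : nat) (x : 'cV[R]_d).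

Lemma linf_ge0 : 0 <= linf x.
Proof. by rewrite /linf; elim/big_ind: _ => // a b; rewrite le_max => ->. Qed.

Lemma ler_linf i : `|x i ord0| <= linf x.
Proof. exact: (le_bigmax 0 (fun i => `|x i ord0|) i). Qed.

End Linf.

Definition ramp (R : realType) (p r c : R) : R := relu (p + c - r) - relu (c - r).

Section Ramp.
Variables (R : realType) (p r : R).

Lemma ramp_ge0 c : 0 <= p -> 0 <= ramp p r c.
Proof.
rewrite /ramp => p_ge0.
by have [[? ->]|[? ->]] := relu_cases (p + c - r);
   have [[? ->]|[? ->]] := relu_cases (c - r); lra.
Qed.

Lemma ramp_le c : 0 <= p -> ramp p r c <= p.
Proof.
rewrite /ramp => p_ge0.
by have [[? ->]|[? ->]] := relu_cases (p + c - r);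
   have [[? ->]|[? ->]] := relu_cases (c - r); lra.
Qed.

Lemma ramp_le_homo c1 c2 : 0 <= p -> c1 <= c2 -> ramp p r c1 <= ramp p r c2.
Proof.
rewrite /ramp => p_ge0 le_c.
by have [[? ->]|[? ->]] := relu_cases (p + c1 - r);
   have [[? ->]|[? ->]] := relu_cases (c1 - r);
   have [[? ->]|[? ->]] := relu_cases (p + c2 - r);
   have [[? ->]|[? ->]] := relu_cases (c2 - r); lra.
Qed.

Lemma ramp_right c : 0 <= p -> r <= c -> ramp p r c = p.
Proof. by move=> p_ge0 le_rc; rewrite /ramp !relu_id; lra. Qed.

Lemma ramp_left c : 0 <= p -> c <= r - p -> ramp p r c = 0.
Proof. by move=> p_ge0 le_c; rewrite /ramp !relu0; lra. Qed.

Lemma ramp_step_bounds c : 0 <= p -> 0 <= ramp p r c - ramp p r (c - 1) <= p.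
Proof.
move=> p_ge0; have le_c : c - 1 <= c by lra.
have := ramp_le_homo p_ge0 le_c; have := ramp_ge0 (c - 1) p_ge0.
have := ramp_le c p_ge0; lra.
Qed.

End Ramp.

Lemma ramp_step_nat (R : realType) (p : R) (n m : nat) : 0 <= p <= 1 ->
  ramp p n%:R m%:R - ramp p n%:R (m%:R - 1) = p *+ (n == m).
Proof.
case/andP=> p_ge0 p_le1.
have [lt_nm|lt_mn|<-] := ltngtP n m.
- have : n%:R + 1 <= m%:R :> R by rewrite natr1 ler_nat.
  by move=> h; rewrite !ramp_right ?subrr //; lra.
- have : m%:R + 1 <= n%:R :> R by rewrite natr1 ler_nat.
  by move=> h; rewrite !ramp_left ?subrr //; lra.
- by rewrite ramp_right // ramp_left ?subr0 ?mulr1n //; lra.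
Qed.

Section Rank.
Local Open Scope order_scope.
Variables (disp : Order.disp_t) (T : orderType disp) (d : nat) (f : 'I_d -> T).

Definition rank i := #|[set j | f j < f i]|.

Lemma rank_lt i : (rank i < d)%N.
Proof.
rewrite -[d]card_ord -(cardC [set j | f j < f i]) -[X in (X < _)%N]addn0 ltn_add2l.
by apply/card_gt0P; exists i; rewrite !inE ltxx.
Qed.

Lemma rank_lt_homo i j : f i < f j -> (rank i < rank j)%N.
Proof.
move=> lt_ij; apply: proper_card; apply/properP; split.
  by apply/subsetP => l; rewrite !inE => /lt_trans; apply.
by exists i; rewrite !inE ?ltxx.
Qed.

Hypothesis f_inj : injective f.

Definition rank_ord i : 'I_d := Ordinal (rank_lt i).

Lemma rank_ord_inj : injective rank_ord.
Proof.
move=> i j /(congr1 val) /= eq_rk; apply: f_inj.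
by case: (ltgtP (f i) (f j)) => // /rank_lt_homo; rewrite eq_rk ltnn.
Qed.

Definition rank_perm : {perm 'I_d} := perm rank_ord_inj.

Lemma rank_permV k : rank (rank_perm^-1 k)%g = k.
Proof. by have := permKV rank_perm k; rewrite permE => /(congr1 val). Qed.

Lemma sorted_rank_permV (k l : 'I_d) : (k <= l)%N -> f (rank_perm^-1 k)%g <= f (rank_perm^-1 l)%g.
Proof.
move=> le_kl; rewrite leNgt; apply/negP => /rank_lt_homo.
by rewrite !rank_permV; lia.
Qed.

End Rank.

Section IndexedNet.
Variables (R : realType) (T1 T2 : finType) (d h1 h2 e : nat).
Variables (e1 : 'I_h1 -> T1) (e2 : 'I_h2 -> T2).
Hypotheses (e1_bij : bijective e1) (e2_bij : bijective e2).
Variables (w1 : T1 -> 'I_d -> R) (b1 : T1 -> R) (w2 : T2 -> T1 -> R) (b2 : T2 -> R).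
Variable (w3 : 'I_e -> T2 -> R).

Lemma relu_net2_indexedE x k :
  relu_net2 (\matrix_(a, m) w1 (e1 a) m) (\col_a b1 (e1 a))
            (\matrix_(a, a') w2 (e2 a) (e1 a')) (\col_a b2 (e2 a))
            (\matrix_(k, a) w3 k (e2 a)) 0 x k ord0 =
  \sum_u w3 k u * relu (\sum_t w2 u t * relu (\sum_m w1 t m * x m ord0 + b1 t) + b2 u).
Proof.
rewrite /relu_net2 !mxE addr0 (reindex e2) /=; last exact: onW_bij.
apply: eq_bigr => a _; rewrite !mxE (reindex e1) /=; last exact: onW_bij.
congr (_ * relu (_ + _)); apply: eq_bigr => a' _; rewrite !mxE.
by congr (_ * relu (_ + _)); apply: eq_bigr => m _; rewrite mxE.
Qed.

End IndexedNet.

Definition enum_ord_of_card (T : finType) n (card_T : #|T| = n) (a : 'I_n) : T :=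
  enum_val (cast_ord (esym card_T) a).

Lemma enum_ord_of_card_bij (T : finType) n (card_T : #|T| = n) :
  bijective (enum_ord_of_card card_T).
Proof.
exists (fun t => cast_ord card_T (enum_rank t)) => a.
  by rewrite /enum_ord_of_card enum_valK cast_ordKV.
by rewrite /enum_ord_of_card cast_ordK enum_rankK.
Qed.

Lemma sum_delta_mul (R : realType) (T : finType) (i : T) (F : T -> R) :
  \sum_m (m == i)%:R * F m = F i.
Proof.
under eq_bigr do rewrite mulr_natl mulrb.
by rewrite -big_mkcond big_pred1_eq.
Qed.

Definition neuron d := (bool * bool * 'I_d * 'I_d)%type.

Lemma card_neuron d : #|{: neuron d}| = (4 * d ^ 2)%N.
Proof. by rewrite !card_prod !card_bool !card_ord; lia. Qed.

Lemma sum_neuron (R : realType) d (F : neuron d -> R) :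
  \sum_t F t = \sum_b \sum_c \sum_i \sum_j F (b, c, i, j).
Proof. by rewrite !pair_big /=; apply: eq_bigr => -[[[]]]. Qed.

Section SortingNet.
Variables (R : realType) (d : nat) (delta : R).
Implicit Types (x : 'cV[R]_d) (t u : neuron d).

(* A first-layer neuron (copy, shifted, i, j) computes [x_i]_+ if copy and
   [(x_i - x_j)/delta - shifted]_+ otherwise; a second-layer neuron (c1, c2, i, k)
   computes [(~~ c1) [x_i]_+ + k - c2 - r_i]_+ with r_i the soft rank of x_i. *)
Definition sort_w1 t (m : 'I_d) : R :=
  let: (copy, _, i, j) := t in
  if copy then (m == i)%:R else ((m == i)%:R - (m == j)%:R) / delta.
Definition sort_b1 t : R :=
  let: (copy, shifted, _, _) := t in if ~~ copy && shifted then -1 else 0.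
Definition sort_w2 u t : R :=
  let: (c1, _, i, _) := u in let: (copy, shifted, i', j) := t in
  if copy then (~~ c1 && ~~ shifted && (i' == i) && (j == i))%:R
  else (i' == i)%:R * (if shifted then 1 else -1).
Definition sort_b2 u : R := let: (_, c2, _, k) := u in k%:R - c2%:R.
Definition sort_w3 (k : 'I_d) u : R :=
  let: (c1, c2, _, k') := u in (k' == k)%:R * (-1) ^+ (c1 + c2).

Definition sort_hidden1 x t := relu (\sum_m sort_w1 t m * x m ord0 + sort_b1 t).

Definition soft_step (z : R) := relu (z / delta) - relu (z / delta - 1).
Definition soft_rank x i := \sum_j soft_step (x i ord0 - x j ord0).
Definition sort_out x (k : 'I_d) :=
  \sum_i (ramp (relu (x i ord0)) (soft_rank x i) k%:R
          - ramp (relu (x i ord0)) (soft_rank x i) (k%:R - 1)).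

Lemma sort_hidden1_copy x c i j : sort_hidden1 x (true, c, i, j) = relu (x i ord0).
Proof. by rewrite /sort_hidden1 /= sum_delta_mul addr0. Qed.

Lemma sort_hidden1_diff x c i j :
  sort_hidden1 x (false, c, i, j) = relu ((x i ord0 - x j ord0) / delta - c%:R).
Proof.
rewrite /sort_hidden1 /=.
under eq_bigr do rewrite mulrAC mulrBl.
rewrite -mulr_suml sumrB !sum_delta_mul.
by case: c; rewrite ?subr0 ?addr0.
Qed.

Lemma soft_rank_sort_hidden1 x i :
  soft_rank x i = \sum_j sort_hidden1 x (false, false, i, j) - \sum_j sort_hidden1 x (false, true, i, j).
Proof. by rewrite -sumrB; apply: eq_bigr => j _; rewrite !sort_hidden1_diff subr0. Qed.

Definition sort_hidden2 x u := relu (\sum_t sort_w2 u t * sort_hidden1 x t + sort_b2 u).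

Lemma sort_hidden2E x c1 c2 i k : sort_hidden2 x (c1, c2, i, k) =
  relu ((~~ c1)%:R * relu (x i ord0) + k%:R - c2%:R - soft_rank x i).
Proof.
have copyE b : \sum_i' \sum_j (~~ c1 && ~~ b && (i' == i) && (j == i))%:R * sort_hidden1 x (true, b, i', j)
               = (~~ c1 && ~~ b)%:R * relu (x i ord0).
  rewrite pair_big -(sort_hidden1_copy x b i i).
  rewrite -(sum_delta_mul (i, i) (fun p => (~~ c1 && ~~ b)%:R * sort_hidden1 x (true, b, p.1, p.2))).
  apply: eq_bigr => -[i' j] _ /=; rewrite xpair_eqE.
  by case: (~~ c1 && ~~ b); case: (i' == i); case: (j == i); rewrite /= ?mul0r ?mul1r.
have diffE (s : R) b : \sum_i' \sum_j ((i' == i)%:R * s) * sort_hidden1 x (false, b, i', j)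
               = s * \sum_j sort_hidden1 x (false, b, i, j).
  rewrite -(sum_delta_mul i (fun i' => s * \sum_j sort_hidden1 x (false, b, i', j))).
  by apply: eq_bigr => i' _; rewrite mulrA mulr_sumr.
rewrite /sort_hidden2 sum_neuron !big_bool !copyE !diffE /= soft_rank_sort_hidden1.
by rewrite andbF andbT mul0r add0r mul1r mulN1r; congr relu; ring.
Qed.

Let idx := enum_ord_of_card (card_neuron d).

Definition sort_W1 : 'M[R]_(4 * d ^ 2, d) := \matrix_(a, m) sort_w1 (idx a) m.
Definition sort_B1 : 'cV[R]_(4 * d ^ 2) := \col_a sort_b1 (idx a).
Definition sort_W2 : 'M[R]_(4 * d ^ 2, 4 * d ^ 2) := \matrix_(a, a') sort_w2 (idx a) (idx a').
Definition sort_B2 : 'cV[R]_(4 * d ^ 2) := \col_a sort_b2 (idx a).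
Definition sort_W3 : 'M[R]_(d, 4 * d ^ 2) := \matrix_(k, a) sort_w3 k (idx a).

Lemma sort_netE x k : relu_net2 sort_W1 sort_B1 sort_W2 sort_B2 sort_W3 0 x k ord0 = sort_out x k.
Proof.
rewrite relu_net2_indexedE; try exact: enum_ord_of_card_bij.
transitivity (\sum_u sort_w3 k u * sort_hidden2 x u) => //.
have select s c1 c2 : \sum_i \sum_k' (k' == k)%:R * s * sort_hidden2 x (c1, c2, i, k')
                    = s * \sum_i sort_hidden2 x (c1, c2, i, k).
  rewrite mulr_sumr; apply: eq_bigr => i _.
  rewrite -(sum_delta_mul k (fun k' => s * sort_hidden2 x (c1, c2, i, k'))).
  by apply: eq_bigr => k' _; rewrite mulrA.
rewrite sum_neuron !big_bool !select /= expr0 expr1 sqrrN expr1n !mulN1r !mul1r.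
rewrite -!sumrN -!big_split /=; apply: eq_bigr => i _.
rewrite !sort_hidden2E /= mul1r mul0r !add0r !subr0 mulr1n /ramp.
rewrite [_ + (_ - 1)]addrA; ring.
Qed.

Lemma sort_out_bound x k : `|sort_out x k| <= d%:R * linf x.
Proof.
have term_bounds i : 0 <= ramp (relu (x i ord0)) (soft_rank x i) k%:R
                          - ramp (relu (x i ord0)) (soft_rank x i) (k%:R - 1) <= linf x.
  have /andP[-> le_p] := ramp_step_bounds (soft_rank x i) k%:R (relu_ge0 (x i ord0)).
  by rewrite (le_trans le_p) // (le_trans (relu_le_norm _)) ?ler_linf.
rewrite ger0_norm; last by apply: sumr_ge0 => i _; case/andP: (term_bounds i).
apply: (@le_trans _ _ (\sum_(i < d) linf x)).
  by apply: ler_sum => i _; case/andP: (term_bounds i).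
by rewrite sumr_const card_ord mulr_natl.
Qed.

Lemma sort_w2_bound u t : `|sort_w2 u t| <= 1.
Proof.
case: u t => [[[c1 c2] i] k] [[[[] shifted] i'] j] /=.
  by case: (_ && _); rewrite ?normr1 ?normr0.
by case: (i' == i); case: shifted; rewrite ?mul1r ?mul0r ?normrN ?normr1 ?normr0.
Qed.

Lemma sort_w3_bound k u : `|sort_w3 k u| <= 1.
Proof.
case: u => [[[c1 c2] i] k'] /=.
by rewrite normrM normrX normrN normr1 expr1n mulr1; case: (k' == k); rewrite ?normr1 ?normr0.
Qed.

Hypothesis delta_gt0 : 0 < delta.

Lemma sort_w1_bound t m : delta <= 1 -> `|sort_w1 t m| <= delta^-1.
Proof.
move=> delta_le1; have one_le : 1 <= delta^-1 by rewrite invf_ge1.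
case: t => [[[[] _] i] j] /=.
  by case: (m == i); rewrite ?normr1 ?normr0 // (le_trans ler01).
rewrite normrM normfV (gtr0_norm delta_gt0) -[X in _ <= X]mul1r ler_pM2r ?invr_gt0 //.
by case: (m == i); case: (m == j); rewrite ?subrr ?subr0 ?sub0r ?normrN ?normr1 ?normr0.
Qed.

Lemma soft_step_le0 z : z <= 0 -> soft_step z = 0.
Proof.
move=> z_le0; have : z / delta <= 0 by rewrite ler_pdivrMr ?mul0r.
by move=> ?; rewrite /soft_step !relu0 ?subrr //; lra.
Qed.

Lemma soft_step_ge z : delta <= z -> soft_step z = 1.
Proof.
move=> le_z; have : 1 <= z / delta by rewrite ler_pdivlMr ?mul1r.
by move=> ?; rewrite /soft_step !relu_id; lra.
Qed.

Section Separated.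
Variable x : 'cV[R]_d.
Hypotheses (x_S : in_S delta x) (x_neq0 : forall i, x i ord0 != 0).

Lemma in_S_inj : injective (fun i => x i ord0).
Proof.
move=> i j eq_x; apply/eqP; apply: contraT => ne_ij.
by have := x_S.2 i j ne_ij (x_neq0 i) (x_neq0 j); rewrite eq_x subrr normr0 leNgt delta_gt0.
Qed.

Lemma soft_rankE i : soft_rank x i = (rank (fun j => x j ord0) i)%:R.
Proof.
rewrite /soft_rank /rank -sum1_card natr_sum [RHS]big_mkcond /=.
apply: eq_bigr => j _; rewrite inE; case: ltrP => [lt_ji|le_ij].
  have ne_ij : i != j by apply: contraTneq lt_ji => ->; rewrite ltxx.
  have := x_S.2 i j ne_ij (x_neq0 i) (x_neq0 j).
  by rewrite ger0_norm => [le_d|]; [rewrite soft_step_ge | rewrite subr_ge0 ltW].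
by rewrite soft_step_le0 // subr_le0.
Qed.

Lemma sort_outE k : sort_out x k = x ((rank_perm in_S_inj)^-1 k)%g ord0.
Proof.
have x_01 i : 0 <= x i ord0 <= 1 by have := delta_gt0; have /andP[] := x_S.1 i (x_neq0 i); lra.
rewrite /sort_out -(sum_delta_mul ((rank_perm in_S_inj)^-1 k)%g (fun i => x i ord0)).
apply: eq_bigr => i _; rewrite soft_rankE relu_id; last by case/andP: (x_01 i).
rewrite ramp_step_nat // mulr_natl; congr (_ *+ nat_of_bool _).
apply/eqP/eqP => [eq_rk|->]; last by rewrite rank_permV.
by apply: (canRL (permK _)); apply: val_inj; rewrite /= permE.
Qed.

End Separated.

End SortingNet.

Lemma sorts_to_rank_permV (R : realType) d (x y : 'cV[R]_d)
    (x_inj : injective (fun i => x i ord0)) :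
  (forall k, y k ord0 = x ((rank_perm x_inj)^-1 k)%g ord0) -> sorts_to x y.
Proof.
move=> yE; split; first by exists (rank_perm x_inj)^-1%g.
by move=> k l le_kl; rewrite !yE; apply: (sorted_rank_permV x_inj).
Qed.

Theorem propositionB1 (R : realType) (d : nat) (delta : R) :
  (0 < d)%N -> 0 < delta ->
  exists (W1 : 'M[R]_(4 * d ^ 2, d)) (b1 : 'cV[R]_(4 * d ^ 2))
         (W2 : 'M[R]_(4 * d ^ 2, 4 * d ^ 2)) (b2 : 'cV[R]_(4 * d ^ 2))
         (W3 : 'M[R]_(d, 4 * d ^ 2)) (b3 : 'cV[R]_d),
    [/\ entries_bounded W1 (1 / delta),
        entries_bounded W2 (1 / delta),
        entries_bounded W3 (1 / delta),
        (forall x : 'cV[R]_d, in_S delta x -> (forall i, x i ord0 != 0) ->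
           sorts_to x (relu_net2 W1 b1 W2 b2 W3 b3 x)) &
        (forall (x : 'cV[R]_d) (i : 'I_d),
           `|relu_net2 W1 b1 W2 b2 W3 b3 x i ord0| <= d%:R * linf x)].
Proof.
move=> d_gt0 delta_gt0; rewrite div1r.
have [delta_le1|delta_gt1] := lerP delta 1.
  have one_le_inv : 1 <= delta^-1 by rewrite invf_ge1.
  exists (sort_W1 d delta), (sort_B1 R d), (sort_W2 R d), (sort_B2 R d), (sort_W3 R d), 0.
  split=> [a m|a a'|k a|x x_S x_neq0|x k].
  - by rewrite mxE sort_w1_bound.
  - by rewrite mxE (le_trans _ one_le_inv) ?sort_w2_bound.
  - by rewrite mxE (le_trans _ one_le_inv) ?sort_w3_bound.
  - apply: (sorts_to_rank_permV (x_inj := in_S_inj delta_gt0 x_S x_neq0)) => k.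
    by rewrite sort_netE sort_outE.
  - by rewrite sort_netE sort_out_bound.
(* For delta > 1 the weights 1 exceed 1/delta, but then no vector with a non-zero
   entry lies in S^d_delta and the zero network does the job. *)
have zero_bounded m n : entries_bounded (0 : 'M[R]_(m, n)) delta^-1.
  by move=> i j; rewrite mxE normr0 invr_ge0 ltW.
exists 0, 0, 0, 0, 0, 0; split=> // [x [x_S _] x_neq0|x k].
  by have := x_S (Ordinal d_gt0) (x_neq0 _); lra.
by rewrite /relu_net2 mul0mx addr0 mxE normr0 mulr_ge0 ?linf_ge0.
Qed.
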